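(* Let $\theta$ be a labelled tree (as defined below) such that $\Psi_{n_\ell}(\omega\cdot\nu_\ell)\neq0$ for every line $\ell$ of $\theta$ with $n_\ell\ge0$, and let $T$ be a self-energy cluster of $\theta$ on scale $n\ge0$ which is renormalised, i.e. no subgraph of $T$ is a self-energy cluster of $\theta$. Then for every $0\le p\le n$, $$\mathfrak{N}_p(T)\le 2^{-(m_p-2)}K(T),$$ where $\mathfrak{N}_p(T)$ is the number of lines of $T$ with scale $\ge p$ and $K(T):=\sum_{v\in N(T)}|\nu_v|$, $N(T)$ being the set of nodes of $T$.
   Context: Notation: $\omega\in\mathbb{R}^d$ satisfies the Bryuno condition; $\alpha_m(\omega):=\inf_{0<|\nu|\le2^m}|\omega\cdot\nu|$ with $|\nu|$ the $\ell^1$ norm; $m_0=0$, $m_{n+1}=m_n+p_n+1$ with $p_n:=\max\{q\ge0:\alpha_{m_n}(\omega)<2\alpha_{m_n+q}(\omega)\}$. $\chi$ is an even $C^\infty$ function, non-increasing in $|x|$, equal to $1$ for $|x|\le1/2$ and $0$ for $|x|\ge1$; $\chi_{-1}\equiv1$, $\chi_n(x)=\chi(4x/\alpha_{m_n}(\omega))$, $\psi_n=1-\chi_n$ ($n\ge0$), $\Psi_n=\chi_{n-1}\psi_n$ ($n\ge0$); thus $\Psi_n(x)\neq0$ implies $\alpha_{m_n}(\omega)/8<|x|<\alpha_{m_{n-1}}(\omega)/4$ (with $\alpha_{m_{-1}}:=+\infty$). Trees: a tree $\theta$ is a finite rooted tree whose root has exactly one incident line (the root line); all other vertices are nodes; lines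 are oriented toward the root, and each line $\ell=\ell_v$ is identified with the node $v$ it leaves. Write $w\preceq v$ if $v$ lies on the path from $w$ to the root. Each node $v$ carries a mode $\nu_v\in\mathbb{Z}^d$; each line $\ell_v$ carries the momentum $\nu_{\ell_v}=\sum_{w\preceq v}\nu_w$, required to be nonzero for all lines except possibly the root line; each line carries a scale $n_\ell$, with $n_\ell=-1$ if $\nu_\ell=0$ and $n_\ell\in\{0,1,2,\dots\}$ otherwise. A cluster on scale $n$ is a maximal connected subgraph (set of nodes together with the lines of $\theta$ joining them) all of whose lines have scale $\le n$ and at least one line of which has scale $n$; a line enters (exits) a subgraph $T$ if it connects a node outside $T$ to a node in $T$ (a node in $T$ to a node outside). A self-energy cluster is either a cluster with exactly one entering line $\ell'$ and one exiting line $\ell$ satisfying $\nu_\ell=\nu_{\ell'}$, or (scale $-1$) a single node $v$ with $\nu_v=0$ having exactly one entering line. *)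

From Stdlib Require Import Reals ZArith Arith List Bool.
Import ListNotations.
Open Scope R_scope.

(* A vector of Z^d is represented by a function nat -> Z of which only the
   components 0..d-1 are meaningful; all notions below only look at those. *)
Definition vec := nat -> Z.

Definition Zsum (l : list nat) (f : nat -> Z) : Z :=
  fold_right (fun i acc => (f i + acc)%Z) 0%Z l.
Definition Rsum (l : list nat) (f : nat -> R) : R :=
  fold_right (fun i acc => f i + acc) 0 l.

Definition dot (d : nat) (omega : nat -> R) (nu : vec) : R :=
  Rsum (seq 0 d) (fun i => omega i * IZR (nu i)).
Definition norm1 (d : nat) (nu : vec) : Z :=
  Zsum (seq 0 d) (fun i => Z.abs (nu i)).
Definition vnonzero (d : nat) (nu : vec) : Prop :=
  exists i, (i < d)%nat /\ nu i <> 0%Z.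
Definition vzero (d : nat) (nu : vec) : Prop :=
  forall i, (i < d)%nat -> nu i = 0%Z.
Definition veq (d : nat) (nu mu : vec) : Prop :=
  forall i, (i < d)%nat -> nu i = mu i.

(* ---------- alpha_m(omega) = inf_{0<|nu|<=2^m} |omega.nu| ---------- *)
(* The set of such nu is finite; we enumerate the box [-2^m,2^m]^d. *)
Definition Zrange (B : Z) : list Z :=
  map (fun k => (Z.of_nat k - B)%Z) (seq 0 (Z.to_nat (2 * B + 1))).
Fixpoint boxlists (d : nat) (B : Z) : list (list Z) :=
  match d with
  | O => [[]]
  | S d' => flat_map (fun z => map (cons z) (boxlists d' B)) (Zrange B)
  end.
Definition vec_of_list (l : list Z) : vec := fun i => nth i l 0%Z.
Definition nonzerob (d : nat) (nu : vec) : bool :=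
  existsb (fun i => negb (Z.eqb (nu i) 0)) (seq 0 d).
Definition alpha_candidates (d m : nat) : list vec :=
  filter (fun nu => nonzerob d nu && Z.leb (norm1 d nu) (2 ^ Z.of_nat m))
         (map vec_of_list (boxlists d (2 ^ Z.of_nat m))).
Definition Rmin_list (l : list R) : R :=
  match l with [] => 0 | x :: xs => fold_right Rmin x xs end.
Definition alpha (d : nat) (omega : nat -> R) (m : nat) : R :=
  Rmin_list (map (fun nu => Rabs (dot d omega nu)) (alpha_candidates d m)).

Definition bryuno (d : nat) (omega : nat -> R) : Prop :=
  (forall m, 0 < alpha d omega m) /\
  exists l, Un_cv (fun M => sum_f_R0 (fun k => ln (/ alpha d omega k) / 2 ^ k) M) l.

Definition is_pn (d : nat) (omega : nat -> R) (mn q : nat) : Prop :=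
  alpha d omega mn < 2 * alpha d omega (mn + q) /\
  forall q', alpha d omega mn < 2 * alpha d omega (mn + q') -> (q' <= q)%nat.
Definition is_mseq (d : nat) (omega : nat -> R) (m : nat -> nat) : Prop :=
  m O = O /\
  forall n, exists q, is_pn d omega (m n) q /\ m (S n) = (m n + q + 1)%nat.

Definition smooth (f : R -> R) : Prop :=
  exists D : nat -> R -> R, D O = f /\
    forall k x, derivable_pt_lim (D k) x (D (S k) x).
Definition cutoff (chi : R -> R) : Prop :=
  smooth chi /\
  (forall x, chi (- x) = chi x) /\
  (forall x y, Rabs x <= Rabs y -> chi y <= chi x) /\
  (forall x, Rabs x <= 1 / 2 -> chi x = 1) /\
  (forall x, 1 <= Rabs x -> chi x = 0).
Definition chi_n (chi : R -> R) d omega (m : nat -> nat) (n : nat) (x : R) : R :=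
  chi (4 * x / alpha d omega (m n)).
(* Psi_n = chi_{n-1} psi_n, psi_n = 1 - chi_n, chi_{-1} = 1 *)
Definition Psi (chi : R -> R) d omega (m : nat -> nat) (n : nat) (x : R) : R :=
  (match n with O => 1 | S k => chi_n chi d omega m k x end) *
  (1 - chi_n chi d omega m n x).

(* Nodes are 0..N-1; par v = Some w: the line l_v leaving v enters w;
   par v = None: l_v is the root line (enters the root). *)
Definition step (par : nat -> option nat) (o : option nat) : option nat :=
  match o with None => None | Some x => par x end.
Fixpoint iter_par (par : nat -> option nat) (k : nat) (o : option nat) : option nat :=
  match k with O => o | S k' => iter_par par k' (step par o) end.

Record is_tree (N : nat) (par : nat -> option nat) : Prop := {
  par_range : forall v w, (v < N)%nat -> par v = Some w -> (w < N)%nat;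
  root_unique : exists r, (r < N)%nat /\ par r = None /\
                  forall v, (v < N)%nat -> par v = None -> v = r;
  acyclic : forall v, (v < N)%nat -> exists k, iter_par par k (Some v) = None }.

Definition optnat_eqb (o : option nat) (v : nat) : bool :=
  match o with Some x => Nat.eqb x v | None => false end.
(* w ⪯ v : v lies on the path from w to the root (paths in a tree with
   N nodes have length < N) *)
Definition preceq (N : nat) (par : nat -> option nat) (w v : nat) : bool :=
  existsb (fun k => optnat_eqb (iter_par par k (Some w)) v) (seq 0 (S N)).
Definition momentum (N : nat) (par : nat -> option nat) (nu : nat -> vec) (v : nat) : vec :=
  fun i => Zsum (filter (fun w => preceq N par w v) (seq 0 N)) (fun w => nu w i).

(* labelled tree: modes nu, scales (scale v = n_{l_v}, -1 encoded as -1) *)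
Definition labelled_tree (d N : nat) (par : nat -> option nat) (nu : nat -> vec)
    (scale : nat -> Z) : Prop :=
  is_tree N par /\
  (forall v, (v < N)%nat -> par v <> None -> vnonzero d (momentum N par nu v)) /\
  (forall v, (v < N)%nat ->
     (vzero d (momentum N par nu v) -> scale v = (-1)%Z) /\
     (vnonzero d (momentum N par nu v) -> (0 <= scale v)%Z)).

(* A subgraph is a set T of nodes with the lines of theta joining them. *)
Definition in_nodes (N : nat) (T : nat -> bool) : Prop :=
  forall v, T v = true -> (v < N)%nat.
Definition internalb (par : nat -> option nat) (T : nat -> bool) (v : nat) : bool :=
  T v && match par v with Some w => T w | None => false end.

Inductive conn (par : nat -> option nat) (T : nat -> bool) : nat -> nat -> Prop :=
  | conn_refl v : T v = true -> conn par T v v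
  | conn_up u v w : conn par T u v -> internalb par T v = true -> par v = Some w ->
      conn par T u w
  | conn_down u v w : conn par T u w -> internalb par T v = true -> par v = Some w ->
      conn par T u v.
Definition connected (par : nat -> option nat) (T : nat -> bool) : Prop :=
  forall u v, T u = true -> T v = true -> conn par T u v.
Definition lines_le (par : nat -> option nat) (scale : nat -> Z) (T : nat -> bool) (n : Z) : Prop :=
  forall v, internalb par T v = true -> (scale v <= n)%Z.

Definition cluster (N : nat) (par : nat -> option nat) (scale : nat -> Z)
    (T : nat -> bool) (n : Z) : Prop :=
  in_nodes N T /\ connected par T /\ lines_le par scale T n /\
  (exists v, internalb par T v = true /\ scale v = n) /\
  (forall T', in_nodes N T' -> (forall v, T v = true -> T' v = true) ->
     connected par T' -> lines_le par scale T' n ->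
     forall v, T' v = true -> T v = true).

Definition entering (N : nat) (par : nat -> option nat) (T : nat -> bool) (w : nat) : Prop :=
  (w < N)%nat /\ T w = false /\ exists v, par w = Some v /\ T v = true.
Definition exiting (N : nat) (par : nat -> option nat) (T : nat -> bool) (v : nat) : Prop :=
  (v < N)%nat /\ T v = true /\ (par v = None \/ exists w, par v = Some w /\ T w = false).

Definition se_cluster_on_scale (d N : nat) (par : nat -> option nat) (nu : nat -> vec)
    (scale : nat -> Z) (T : nat -> bool) (n : Z) : Prop :=
  cluster N par scale T n /\
  exists l', entering N par T l' /\ (forall x, entering N par T x -> x = l') /\
  exists l, exiting N par T l /\ (forall x, exiting N par T x -> x = l) /\
  veq d (momentum N par nu l) (momentum N par nu l').

(* scale -1 self-energy cluster: a single node v with nu_v = 0 and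
   exactly one entering line *)
Definition se_cluster_trivial (d N : nat) (par : nat -> option nat) (nu : nat -> vec)
    (T : nat -> bool) : Prop :=
  exists v, (v < N)%nat /\ (forall x, T x = true <-> x = v) /\ vzero d (nu v) /\
  exists w, entering N par T w /\ forall x, entering N par T x -> x = w.

Definition se_cluster (d N : nat) (par : nat -> option nat) (nu : nat -> vec)
    (scale : nat -> Z) (T : nat -> bool) : Prop :=
  (exists n, se_cluster_on_scale d N par nu scale T n) \/
  se_cluster_trivial d N par nu T.

Definition renormalised (d N : nat) (par : nat -> option nat) (nu : nat -> vec)
    (scale : nat -> Z) (T : nat -> bool) : Prop :=
  forall S, se_cluster d N par nu scale S ->
    (forall v, S v = true -> T v = true) ->
    forall v, T v = true -> S v = true.

Definition Nlines_ge (N : nat) (par : nat -> option nat) (scale : nat -> Z)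
    (T : nat -> bool) (p : nat) : nat :=
  length (filter (fun v => internalb par T v && Z.leb (Z.of_nat p) (scale v)) (seq 0 N)).
Definition Kval (d N : nat) (nu : nat -> vec) (T : nat -> bool) : Z :=
  Zsum (filter T (seq 0 N)) (fun v => norm1 d (nu v)).

(* The proof is a Siegel-type counting argument.  Call the lines of T of scale
   >= p "heavy", and call the tops of T the heavy lines together with the
   exiting line of T.  Cutting T along its heavy lines splits it into
   components, one below each top (the nodes whose upward walk first meets a
   line of the top); there are N_p(T) + 1 of them.  The in-degree of a
   component is the number of heavy lines and entering lines of T that enter
   it, so the in-degrees sum up to the number of components.  A component of
   in-degree at most one satisfies 2 K(C) >= 2^{m_p}: its top line has
   momentum equal to the sum of its modes, plus the momentum of its entering
   line if any; this sum is nonzero (otherwise the component would be a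
   self-energy cluster strictly inside T, contradicting renormalisation), and
   the small-divisor bounds coming from the cut-offs Psi together with the
   definition of the sequence m_n force any nonzero vector of small divisor at
   scale p to have norm at least 2^{m_p}/2.  Summing 2^{m_p} <= 4 K(C) +
   2^{m_p} (indeg C - 1) over components gives 2^{m_p} (N_p(T) + 1) <= 4 K(T). *)
From Stdlib Require Import Reals ZArith Arith List Lia Lra Classical Bool FinFun.
Import ListNotations.
Open Scope nat_scope.

Lemma Zsum_cons (x : nat) (l : list nat) (f : nat -> Z) :
  Zsum (x :: l) f = (f x + Zsum l f)%Z.
Proof. reflexivity. Qed.

Lemma Zsum_ext (l : list nat) (f g : nat -> Z) :
  (forall x, In x l -> f x = g x) -> Zsum l f = Zsum l g.
Proof.
  intro H; induction l as [|x l IH]; simpl; auto.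
  rewrite H by (left; auto). f_equal. apply IH; intros; apply H; right; auto.
Qed.

Lemma Zsum_add (l : list nat) (f g : nat -> Z) :
  Zsum l (fun x => f x + g x)%Z = (Zsum l f + Zsum l g)%Z.
Proof. induction l; simpl; auto; unfold Zsum in *; simpl; lia. Qed.

Lemma Zsum_scale (l : list nat) (c : Z) (f : nat -> Z) :
  Zsum l (fun x => c * f x)%Z = (c * Zsum l f)%Z.
Proof. induction l; [simpl; lia|]. rewrite !Zsum_cons, IHl. lia. Qed.

Lemma Zsum_const (l : list nat) (c : Z) : Zsum l (fun _ => c) = (c * Z.of_nat (length l))%Z.
Proof. induction l; [simpl; lia|]. cbn [length]. rewrite Nat2Z.inj_succ, Zsum_cons, IHl. lia. Qed.

Lemma Zsum_le (l : list nat) (f g : nat -> Z) :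
  (forall x, In x l -> (f x <= g x)%Z) -> (Zsum l f <= Zsum l g)%Z.
Proof.
  induction l as [|x l IH]; intro H; simpl; [lia|].
  specialize (H x (or_introl eq_refl)) as H1.
  assert (Zsum l f <= Zsum l g)%Z by (apply IH; intros; apply H; right; auto).
  unfold Zsum in *; simpl; lia.
Qed.

Lemma Zsum_nonneg (l : list nat) (f : nat -> Z) : (forall x, (0 <= f x)%Z) -> (0 <= Zsum l f)%Z.
Proof. intro H; induction l; [simpl; lia|]. rewrite Zsum_cons. specialize (H a). lia. Qed.

Lemma Zsum_term_le (l : list nat) (f : nat -> Z) i :
  In i l -> (forall x, (0 <= f x)%Z) -> (f i <= Zsum l f)%Z.
Proof.
  induction l as [|x l IH]; intros Hi H; [destruct Hi|]. rewrite Zsum_cons.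
  destruct Hi as [->|Hi].
  - pose proof (Zsum_nonneg l f H). lia.
  - specialize (IH Hi H). specialize (H x). lia.
Qed.

Lemma length_as_Zsum (l : list nat) : Z.of_nat (length l) = Zsum l (fun _ => 1%Z).
Proof. rewrite Zsum_const. lia. Qed.

Lemma Zsum_filter_or (l : list nat) (P Q : nat -> bool) (f : nat -> Z) :
  (forall w, In w l -> P w = true -> Q w = true -> False) ->
  Zsum (filter (fun w => P w || Q w) l) f = (Zsum (filter P l) f + Zsum (filter Q l) f)%Z.
Proof.
  induction l as [|x l IH]; intro H; simpl; auto.
  destruct (P x) eqn:Px, (Q x) eqn:Qx; simpl;
    rewrite IH by (intros; eapply H; eauto; right; auto).
  - exfalso; eapply H; eauto; left; auto.
  - unfold Zsum; simpl; lia.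
  - unfold Zsum; simpl; lia.
  - lia.
Qed.

Lemma Zsum_filter_none (l : list nat) (f : nat -> Z) (P : nat -> bool) :
  (forall z, In z l -> P z = false) -> Zsum (filter P l) f = 0%Z.
Proof.
  induction l as [|x l IH]; intro H; simpl; auto.
  rewrite H by (left; auto). apply IH; intros; apply H; right; auto.
Qed.

Lemma Zsum_filter_single (l : list nat) (t : nat) (f : nat -> Z) (P : nat -> bool) :
  In t l -> NoDup l -> (forall z, In z l -> P z = true <-> z = t) -> Zsum (filter P l) f = f t.
Proof.
  induction l as [|x l IH]; intros Hin Hnd HP; [destruct Hin|].
  inversion Hnd; subst. simpl. destruct Hin as [<-|Hin].
  - assert (P x = true) as E by (apply HP; [left|]; auto). rewrite E. simpl.
    rewrite Zsum_filter_none; [lia|]. intros z Hz. destruct (P z) eqn:Pz; auto.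
    apply HP in Pz; [subst; contradiction|right; auto].
  - assert (P x = false) as E.
    { destruct (P x) eqn:Px; auto. apply HP in Px; [subst; contradiction|left; auto]. }
    rewrite E. apply IH; auto. intros z Hz; apply HP; right; auto.
Qed.

Lemma Zsum_indicator (ts : list nat) (y : nat) (c : Z) : NoDup ts -> In y ts ->
  Zsum ts (fun t => if Nat.eqb y t then c else 0%Z) = c.
Proof.
  induction ts as [|x ts IH]; intros Hnd Hin; [destruct Hin|]. inversion Hnd; subst.
  rewrite Zsum_cons. destruct Hin as [->|Hin].
  - rewrite Nat.eqb_refl, (Zsum_ext _ _ (fun _ => 0%Z)), Zsum_const; [lia|].
    intros z Hz. destruct (Nat.eqb_spec y z); subst; [contradiction|auto].
  - destruct (Nat.eqb_spec y x); [subst; contradiction|]. rewrite IH; auto.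
Qed.

Lemma Zsum_fibres (ts l : list nat) (P : nat -> bool) (g : nat -> nat) (h : nat -> Z) :
  NoDup ts -> (forall x, In x l -> P x = true -> In (g x) ts) ->
  Zsum ts (fun t => Zsum (filter (fun x => P x && Nat.eqb (g x) t) l) h) = Zsum (filter P l) h.
Proof.
  intros Hnd. induction l as [|x l IH]; intro H.
  - simpl. rewrite Zsum_const. lia.
  - rewrite (Zsum_ext _ _ (fun t => (if P x && Nat.eqb (g x) t then h x else 0) +
       Zsum (filter (fun x => P x && Nat.eqb (g x) t) l) h)%Z)
      by (intros; simpl; destruct (_ && _); reflexivity).
    rewrite Zsum_add, IH by (intros; apply H; auto; right; auto). simpl.
    destruct (P x) eqn:Px; simpl.
    + rewrite Zsum_indicator; auto. apply H; auto; left; auto.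
    + rewrite Zsum_const. lia.
Qed.

Lemma filter_length0 (l : list nat) (f : nat -> bool) :
  length (filter f l) = 0 -> forall x, In x l -> f x = false.
Proof.
  intros H x Hx. destruct (f x) eqn:E; auto.
  assert (In x (filter f l)) by (apply filter_In; auto).
  destruct (filter f l); simpl in *; [contradiction|lia].
Qed.

Lemma filter_length1 (l : list nat) (f : nat -> bool) : length (filter f l) = 1 ->
  exists x0, In x0 l /\ f x0 = true /\ forall x, In x l -> f x = true -> x = x0.
Proof.
  intro H. destruct (filter f l) as [|x0 [|x1 r]] eqn:E; simpl in H; try lia.
  exists x0. assert (In x0 (filter f l)) as Hin by (rewrite E; left; auto).
  apply filter_In in Hin. destruct Hin as [Hin1 Hin2]. split; auto; split; auto.
  intros x Hx Hfx. assert (In x (filter f l)) as Hin by (apply filter_In; auto).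
  rewrite E in Hin; destruct Hin as [Hin|[]]; auto.
Qed.

Lemma filter_argmax (l : list nat) (f : nat -> bool) (sc : nat -> Z) :
  (exists v, In v l /\ f v = true) ->
  exists v0, In v0 l /\ f v0 = true /\ forall v, In v l -> f v = true -> (sc v <= sc v0)%Z.
Proof.
  induction l as [|x l IH]; intros [v [Hv Hf]]; [destruct Hv|].
  destruct (classic (exists v, In v l /\ f v = true)) as [He|Hn].
  - destruct (IH He) as [v0 [H1 [H2 H3]]].
    destruct (f x) eqn:Fx; [destruct (Z_le_gt_dec (sc x) (sc v0)) as [Hle|Hgt]|].
    + exists v0; split; [right; auto|split; auto]. intros u [<-|Hu] Fu; auto.
    + exists x; split; [left; auto|split; auto].
      intros u [<-|Hu] Fu; [lia|]. specialize (H3 u Hu Fu); lia.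
    + exists v0; split; [right; auto|split; auto]. intros u [<-|Hu] Fu; [congruence|auto].
  - destruct Hv as [<-|Hv]; [|exfalso; apply Hn; eauto].
    exists x; split; [left; auto|split; auto].
    intros u [<-|Hu] Fu; [lia|exfalso; apply Hn; eauto].
Qed.

Lemma norm1_ext d (mu mu' : vec) : (forall i, i < d -> mu i = mu' i) -> norm1 d mu = norm1 d mu'.
Proof. intro H. unfold norm1. apply Zsum_ext. intros i Hi. apply in_seq in Hi. rewrite H; auto; lia. Qed.

Lemma norm1_nonneg d mu : (0 <= norm1 d mu)%Z.
Proof. apply Zsum_nonneg. intros; apply Z.abs_nonneg. Qed.

Lemma norm1_Zsum d (l : list nat) (g : nat -> vec) :
  (norm1 d (fun i => Zsum l (fun w => g w i)) <= Zsum l (fun w => norm1 d (g w)))%Z.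
Proof.
  induction l as [|x l IH]; simpl.
  - unfold norm1. rewrite (Zsum_ext _ _ (fun _ => 0%Z)), Zsum_const; [lia|reflexivity].
  - unfold norm1 at 1. eapply Z.le_trans.
    { apply (Zsum_le _ _ (fun i => Z.abs (g x i) + Z.abs (Zsum l (fun w => g w i)))%Z).
      intros i _. apply Z.abs_triangle. }
    rewrite Zsum_add. fold (norm1 d (g x)). fold (norm1 d (fun i => Zsum l (fun w => g w i))). lia.
Qed.

Lemma abs_le_norm1 d (mu : vec) i : i < d -> (Z.abs (mu i) <= norm1 d mu)%Z.
Proof.
  intro Hi. apply (Zsum_term_le _ (fun i => Z.abs (mu i))); [apply in_seq; lia|].
  intros; apply Z.abs_nonneg.
Qed.

Lemma vnonzero_norm1 d mu : vnonzero d mu -> (1 <= norm1 d mu)%Z.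
Proof. intros [i [Hi Hne]]. pose proof (abs_le_norm1 d mu i Hi). lia. Qed.

Section TreePaths.
Variables (N : nat) (par : nat -> option nat).
Hypothesis Htree : is_tree N par.

Definition reach k w v := iter_par par k (Some w) = Some v.

Lemma iter_None k : iter_par par k None = None.
Proof. induction k; simpl; auto. Qed.

Lemma iter_add a b o : iter_par par (a + b) o = iter_par par b (iter_par par a o).
Proof. revert o; induction a; intro o; simpl; auto. Qed.

Lemma reach0 w v : reach 0 w v -> v = w.
Proof. unfold reach; simpl; intro H; inversion H; auto. Qed.

Lemma reachS k w v : reach (S k) w v <-> exists y, par w = Some y /\ reach k y v.
Proof.
  unfold reach; simpl. split.
  - destruct (par w) eqn:E; [eauto|]. rewrite iter_None; discriminate.
  - intros [y [H1 H2]]; rewrite H1; auto.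
Qed.

Lemma reach_last k w z : reach (S k) w z -> exists y, reach k w y /\ par y = Some z.
Proof.
  unfold reach. replace (S k) with (k + 1) by lia. rewrite iter_add.
  destruct (iter_par par k (Some w)) as [y|]; simpl; [eauto|discriminate].
Qed.

Lemma reach_trans a b w x v : reach a w x -> reach b x v -> reach (a + b) w v.
Proof. unfold reach; intros H1 H2; rewrite iter_add, H1; auto. Qed.

Lemma reach_split a b w x v : reach a w x -> reach b w v -> a <= b -> reach (b - a) x v.
Proof.
  unfold reach; intros H1 H2 Hle. replace b with (a + (b - a)) in H2 by lia.
  rewrite iter_add, H1 in H2; auto.
Qed.

Lemma reach_fun k w x y : reach k w x -> reach k w y -> x = y.
Proof. unfold reach; intros H1 H2; rewrite H1 in H2; inversion H2; auto. Qed.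

Lemma reach_prefix k i w v : reach k w v -> i <= k -> exists y, reach i w y.
Proof.
  unfold reach; intros H Hi. destruct (iter_par par i (Some w)) eqn:E; eauto.
  replace k with (i + (k - i)) in H by lia. rewrite iter_add, E, iter_None in H; discriminate.
Qed.

Lemma reach_range k w v : w < N -> reach k w v -> v < N.
Proof.
  revert w; induction k; intros w Hw H.
  - apply reach0 in H; subst; auto.
  - apply reachS in H; destruct H as [y [H1 H2]].
    apply (IHk y); auto. eapply (par_range _ _ Htree); eauto.
Qed.

Lemma reach_cycle k v : v < N -> reach (S k) v v -> False.
Proof.
  intros Hv H. destruct (acyclic _ _ Htree v Hv) as [K HK].
  assert (Hpow : forall c, reach (S k * c) v v).
  { induction c; [rewrite Nat.mul_0_r; reflexivity|].
    replace (S k * S c) with (S k * c + S k) by lia. eapply reach_trans; eauto. }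
  specialize (Hpow K). unfold reach in Hpow.
  replace (S k * K) with (K + k * K) in Hpow by lia.
  rewrite iter_add, HK, iter_None in Hpow. discriminate.
Qed.

Definition node_at w i := match iter_par par i (Some w) with Some x => x | None => N end.

(* Pigeonhole: a path of length > N revisits a node, and can be shortened. *)
Lemma reach_bound k w v : w < N -> reach k w v -> exists k', k' <= N /\ reach k' w v.
Proof.
  revert w v. induction k as [k IH] using lt_wf_ind. intros w v Hw H.
  destruct (le_lt_dec k N) as [Hle|Hlt]; [eauto|].
  destruct (classic (NoDup (map (node_at w) (seq 0 (S N))))) as [HN|HN].
  - exfalso. assert (incl (map (node_at w) (seq 0 (S N))) (seq 0 N)) as Hi.
    { intros x Hx. apply in_map_iff in Hx. destruct Hx as [i [Hi1 Hi2]].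
      apply in_seq in Hi2. destruct (reach_prefix k i w v H) as [y Hy]; [lia|].
      unfold node_at in Hi1; unfold reach in Hy; rewrite Hy in Hi1; subst.
      apply in_seq. split; [lia|]. simpl. eapply reach_range; eauto. }
    apply NoDup_incl_length in Hi; auto. rewrite length_map, !length_seq in Hi; lia.
  - assert (Hshort : forall i j y, i < j <= N -> reach i w y -> reach j w y ->
              exists k', k' <= N /\ reach k' w v).
    { intros i j y Hij Hi Hj.
      pose proof (reach_split _ _ _ _ _ Hj H ltac:(lia)) as H2.
      apply (IH (i + (k - j))); [lia|exact Hw|]. eapply reach_trans; eauto. }
    assert (~ (forall x y, In x (seq 0 (S N)) -> In y (seq 0 (S N)) ->
               node_at w x = node_at w y -> x = y)) as HH.
    { intro Hc. apply HN. apply Injective_map_NoDup_in; auto. apply seq_NoDup. }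
    apply not_all_ex_not in HH; destruct HH as [i HH].
    apply not_all_ex_not in HH; destruct HH as [j HH].
    apply imply_to_and in HH; destruct HH as [Hi HH].
    apply imply_to_and in HH; destruct HH as [Hj HH].
    apply imply_to_and in HH; destruct HH as [Heq Hne].
    apply in_seq in Hi; apply in_seq in Hj.
    destruct (reach_prefix k i w v H) as [yi Hyi]; [lia|].
    destruct (reach_prefix k j w v H) as [yj Hyj]; [lia|].
    unfold node_at in Heq; unfold reach in Hyi, Hyj; rewrite Hyi, Hyj in Heq; subst yj.
    destruct (Nat.lt_total i j) as [Hl|[He|Hl]]; [|congruence|].
    + apply (Hshort i j yi); auto; lia.
    + apply (Hshort j i yi); auto; lia.
Qed.

Lemma preceq_iff w v : w < N -> (preceq N par w v = true <-> exists k, reach k w v).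
Proof.
  intro Hw. unfold preceq. rewrite existsb_exists. split.
  - intros [k [_ Hk]]. exists k. unfold reach, optnat_eqb in *.
    destruct (iter_par par k (Some w)); [apply Nat.eqb_eq in Hk; subst; auto|discriminate].
  - intros [k Hk]. destruct (reach_bound k w v Hw Hk) as [k' [Hk'1 Hk'2]].
    exists k'. split; [apply in_seq; lia|].
    unfold reach in Hk'2; rewrite Hk'2; simpl; apply Nat.eqb_refl.
Qed.

End TreePaths.

Section Connectivity.
Variable par : nat -> option nat.

Lemma internal_ends (T : nat -> bool) v w : internalb par T v = true -> par v = Some w ->
  T v = true /\ T w = true.
Proof. unfold internalb; intros H E; rewrite E in H; apply andb_true_iff in H; auto. Qed.

Lemma internal_mono (T1 T2 : nat -> bool) v : (forall z, T1 z = true -> T2 z = true) ->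
  internalb par T1 v = true -> internalb par T2 v = true.
Proof.
  unfold internalb; intros H H1. apply andb_true_iff in H1; destruct H1 as [H1 H2].
  rewrite (H v H1). destruct (par v); auto. simpl. apply H; auto.
Qed.

Lemma conn_mono (T1 T2 : nat -> bool) u v : (forall z, T1 z = true -> T2 z = true) ->
  conn par T1 u v -> conn par T2 u v.
Proof.
  intros H Hc; induction Hc.
  - apply conn_refl; auto.
  - eapply conn_up; eauto. eapply internal_mono; eauto.
  - eapply conn_down; eauto. eapply internal_mono; eauto.
Qed.

Lemma conn_trans (T : nat -> bool) x y z : conn par T x y -> conn par T y z -> conn par T x z.
Proof.
  intros H1 H2; revert H1; induction H2; intro H1; auto.
  - eapply conn_up; [apply IHconn; exact H1|eauto|eauto].
  - eapply conn_down; [apply IHconn; exact H1|eauto|eauto].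
Qed.

Lemma conn_sym (T : nat -> bool) u v : conn par T u v -> conn par T v u.
Proof.
  intro H; induction H.
  - apply conn_refl; auto.
  - destruct (internal_ends _ _ _ H0 H1) as [A1 A2].
    eapply conn_trans; [|exact IHconn]. eapply conn_down; eauto. apply conn_refl; auto.
  - destruct (internal_ends _ _ _ H0 H1) as [A1 A2].
    eapply conn_trans; [|exact IHconn]. eapply conn_up; eauto. apply conn_refl; auto.
Qed.

Definition extend (T : nat -> bool) (y : nat) : nat -> bool := fun v => T v || Nat.eqb v y.

Lemma connected_extend (T : nat -> bool) z y : connected par T -> T z = true ->
  (par z = Some y \/ par y = Some z) -> connected par (extend T y).
Proof.
  intros Hc Hz Hzy.
  assert (Hsub : forall v, T v = true -> extend T y v = true)
    by (intros v Hv; unfold extend; rewrite Hv; auto).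
  assert (Hy : extend T y y = true) by (unfold extend; rewrite Nat.eqb_refl, orb_true_r; auto).
  assert (Hzy' : conn par (extend T y) z y).
  { destruct Hzy as [E|E].
    - eapply conn_up; [apply conn_refl; auto| |exact E].
      unfold internalb; rewrite E, (Hsub z Hz), Hy; auto.
    - eapply conn_down; [apply conn_refl; auto| |exact E].
      unfold internalb; rewrite E, (Hsub z Hz), Hy; auto. }
  assert (Hto : forall v, extend T y v = true -> conn par (extend T y) z v).
  { intros v Hv. unfold extend in Hv. apply orb_true_iff in Hv; destruct Hv as [Hv|Hv].
    - apply (conn_mono T); auto.
    - apply Nat.eqb_eq in Hv; subst; auto. }
  intros u v Hu Hv. eapply conn_trans; [apply conn_sym, Hto; auto|apply Hto; auto].
Qed.

Lemma cluster_no_extension N (scale : nat -> Z) (T : nat -> bool) (n : Z) y z :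
  cluster N par scale T n -> y < N -> T y = false -> T z = true ->
  (par z = Some y \/ par y = Some z) ->
  (forall v, internalb par (extend T y) v = true -> internalb par T v = false ->
     (scale v <= n)%Z) ->
  False.
Proof.
  intros [Hin [Hco [Hle [_ Hmax]]]] Hy Ty Tz Hzy Hnew.
  assert (Hext : extend T y y = true -> T y = true).
  { apply (Hmax (extend T y)).
    - intros v Hv. unfold extend in Hv. apply orb_true_iff in Hv; destruct Hv as [Hv|Hv];
        [apply Hin; auto|apply Nat.eqb_eq in Hv; subst; auto].
    - intros v Hv; unfold extend; rewrite Hv; auto.
    - eapply connected_extend; eauto.
    - intros v Hv. destruct (internalb par T v) eqn:Iv; [apply Hle; auto|apply Hnew; auto]. }
  unfold extend in Hext. rewrite Nat.eqb_refl, orb_true_r, Ty in Hext. discriminate (Hext eq_refl).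
Qed.

Lemma extend_new_line (T : nat -> bool) y v :
  internalb par (extend T y) v = true -> internalb par T v = false ->
  exists z, par v = Some z /\ ((v = y /\ extend T y z = true) \/ (T v = true /\ z = y)).
Proof.
  intros Hext Hint. destruct (par v) as [z|] eqn:E;
    [|unfold internalb in Hext; rewrite E, andb_false_r in Hext; discriminate].
  exists z; split; auto. destruct (internal_ends _ _ _ Hext E) as [Ev Ez].
  destruct (Nat.eq_dec v y) as [->|Hne]; [left; auto|right].
  unfold extend in Ev, Ez. rewrite (proj2 (Nat.eqb_neq v y) Hne), orb_false_r in Ev.
  split; auto. destruct (T z) eqn:Tz.
  - unfold internalb in Hint. rewrite Ev, E, Tz in Hint. discriminate.
  - apply Nat.eqb_eq. exact Ez.
Qed.

End Connectivity.

Section Decomposition.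
Variables (d N : nat) (par : nat -> option nat) (nu : nat -> vec) (scale : nat -> Z)
  (T : nat -> bool) (n p b w' a : nat).
Hypothesis Htree : is_tree N par.
Hypothesis Hcl : cluster N par scale T (Z.of_nat n).
Hypothesis Hent : entering N par T w'.
Hypothesis Hentu : forall x, entering N par T x -> x = w'.
Hypothesis Hexi : exiting N par T b.
Hypothesis Hexu : forall x, exiting N par T x -> x = b.
Hypothesis Hpn : p <= n.
Hypothesis Ha : par w' = Some a.
Hypothesis Hveq : veq d (momentum N par nu b) (momentum N par nu w').
Hypothesis Hren : renormalised d N par nu scale T.

Notation reach := (reach par).

Lemma T_bound v : T v = true -> v < N.
Proof. destruct Hcl as [H _]; apply H. Qed.

Lemma T_a : T a = true.
Proof. destruct Hent as [_ [_ [v [H1 H2]]]]. rewrite Ha in H1; inversion H1; subst; auto. Qed.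

Lemma T_w' : T w' = false.
Proof. destruct Hent as [_ [H _]]; auto. Qed.

Lemma w'_bound : w' < N.
Proof. destruct Hent as [H _]; auto. Qed.

Lemma T_b : T b = true.
Proof. destruct Hexi as [_ [H _]]; auto. Qed.

Lemma T_parent w : T w = true -> w <> b -> exists y, par w = Some y /\ T y = true.
Proof.
  intros Hw Hne. destruct (par w) as [y|] eqn:E.
  - destruct (T y) eqn:Ey; eauto. exfalso; apply Hne, Hexu.
    split; [apply T_bound; auto|split; auto]. right; eauto.
  - exfalso; apply Hne, Hexu. split; [apply T_bound; auto|split; auto].
Qed.

Lemma T_reaches_b w : T w = true -> exists k, reach k w b.
Proof.
  intro Hw. destruct (acyclic _ _ Htree w (T_bound w Hw)) as [K HK].
  revert w Hw HK. induction K; intros w Hw HK; [discriminate|].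
  destruct (Nat.eq_dec w b) as [->|Hne]; [exists 0; reflexivity|].
  destruct (T_parent w Hw Hne) as [y [Hy1 Hy2]].
  simpl in HK. rewrite Hy1 in HK. destruct (IHK y Hy2 HK) as [k Hk].
  exists (S k). apply reachS. eauto.
Qed.

Lemma b_not_into_w' : par b = Some w' -> False.
Proof.
  intro E. destruct (T_reaches_b a T_a) as [k Hk].
  apply (reach_cycle N par Htree (S k) b (T_bound b T_b)).
  apply reachS; exists w'; split; [exact E|]. apply reachS; exists a; split; [exact Ha|exact Hk].
Qed.

(* By maximality of the cluster, the entering and exiting lines have scale > n. *)
Lemma entering_scale : (Z.of_nat n < scale w')%Z.
Proof.
  destruct (Z_lt_le_dec (Z.of_nat n) (scale w')) as [H|H]; auto. exfalso.
  apply (cluster_no_extension par N scale T (Z.of_nat n) w' a Hcl w'_bound T_w' T_a (or_intror Ha)).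
  intros v Hext Hint. destruct (extend_new_line par T w' v Hext Hint) as [z [E [[-> _]|[Tv ->]]]];
    auto.
  assert (v = b) as -> by (apply Hexu; repeat split; auto; [apply T_bound; auto|];
    right; exists w'; split; [exact E|exact T_w']).
  exfalso; apply b_not_into_w'; auto.
Qed.

Lemma exiting_scale y : par b = Some y -> (Z.of_nat n < scale b)%Z.
Proof.
  intro Eb. assert (T y = false) as Ty by (destruct Hexi as [_ [_ [H|[w [H1 H2]]]]]; congruence).
  destruct (Z_lt_le_dec (Z.of_nat n) (scale b)) as [H|H]; auto. exfalso.
  assert (y < N) as Hy by (eapply (par_range _ _ Htree); [apply T_bound, T_b|eauto]).
  apply (cluster_no_extension par N scale T (Z.of_nat n) y b Hcl Hy Ty T_b (or_introl Eb)).
  intros v Hext Hint. destruct (extend_new_line par T y v Hext Hint) as [z [E [[-> Ez]|[Tv ->]]]].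
  - exfalso. unfold extend in Ez. destruct (T z) eqn:Tz; simpl in Ez.
    + assert (y = w') as -> by (apply Hentu; split; auto; split; auto; eauto).
      apply b_not_into_w'; auto.
    + apply Nat.eqb_eq in Ez; subst z.
      apply (reach_cycle N par Htree 0 y Hy). apply reachS; exists y; split; auto; reflexivity.
  - assert (v = b) as -> by (apply Hexu; repeat split; auto; [apply T_bound; auto|];
      right; exists y; split; [exact E|exact Ty]).
    exact H.
Qed.

Definition heavy v := internalb par T v && Z.leb (Z.of_nat p) (scale v).
Definition top v := heavy v || Nat.eqb v b.

Lemma heavy_b : heavy b = false.
Proof.
  unfold heavy, internalb. destruct Hexi as [_ [H1 [H2|[w [H2 H3]]]]]; rewrite H1, H2; auto.
  rewrite H3; auto.
Qed.

Lemma top_b : top b = true.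
Proof. unfold top; rewrite Nat.eqb_refl, orb_true_r; auto. Qed.

Lemma top_T v : top v = true -> T v = true.
Proof.
  unfold top, heavy, internalb. intro H. apply orb_true_iff in H; destruct H as [H|H].
  - apply andb_true_iff in H; destruct H as [H _]; apply andb_true_iff in H; tauto.
  - apply Nat.eqb_eq in H; subst; apply T_b.
Qed.

Lemma top_heavy v : top v = true -> v <> b -> heavy v = true.
Proof.
  unfold top. intros H Hne. apply orb_true_iff in H; destruct H as [H|H]; auto.
  apply Nat.eqb_eq in H; congruence.
Qed.

Lemma heavy_scale v : heavy v = true -> (Z.of_nat p <= scale v)%Z.
Proof. unfold heavy; intro H; apply andb_true_iff in H; destruct H as [_ H]; apply Z.leb_le; auto. Qed.

Lemma heavy_bound v : heavy v = true -> v < N.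
Proof.
  unfold heavy, internalb; intro H. apply andb_true_iff in H; destruct H as [H _].
  apply andb_true_iff in H; destruct H as [H _]; apply T_bound; auto.
Qed.

(* top_of w: the first top met walking from w towards the root.  It is
   computed with fuel N, which suffices since b is reached in <= N steps. *)
Fixpoint top_of_fuel (f : nat) (w : nat) : nat :=
  if top w then w else
  match f with O => w | S f' => match par w with Some y => top_of_fuel f' y | None => w end end.
Definition top_of w := top_of_fuel N w.

Definition first_top x t j := reach j x t /\ top t = true /\
  forall i z, i < j -> reach i x z -> top z = false.

Lemma top_of_fuel_spec k : forall f w, k <= f -> T w = true -> reach k w b ->
  exists j, first_top w (top_of_fuel f w) j /\ (forall i z, i <= j -> reach i w z -> T z = true).
Proof.
  assert (Hzero : forall f w, T w = true -> top w = true ->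
    first_top w (top_of_fuel f w) 0 /\ (forall i z, i <= 0 -> reach i w z -> T z = true)).
  { intros f w Hw Et. destruct f; simpl; rewrite Et;
      (split; [split; [reflexivity|split; auto; intros; lia]|]);
      intros i z Hi Hz; (replace i with 0 in Hz by lia); apply reach0 in Hz; subst; auto. }
  induction k; intros f w Hk Hw Hr.
  - apply reach0 in Hr; subst. exists 0. apply Hzero; [apply T_b|apply top_b].
  - destruct (top w) eqn:Et; [exists 0; apply Hzero; auto|].
    apply reachS in Hr. destruct Hr as [y [Hy Hr]].
    destruct f; [lia|]. simpl. rewrite Et, Hy.
    assert (w <> b) as Hne by (intro; subst; rewrite top_b in Et; discriminate).
    assert (T y = true) as HTy by (destruct (T_parent w Hw Hne) as [y' [H1 H2]]; congruence).
    destruct (IHk f y ltac:(lia) HTy Hr) as [j [[H1 [H2 H3]] H4]].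
    exists (S j). split; [split; [apply reachS; eauto|split; auto]|];
      intros i z Hi Hz; (destruct i; [apply reach0 in Hz; subst; auto|]);
      apply reachS in Hz; destruct Hz as [y' [Hy' Hz]]; rewrite Hy in Hy'; inversion Hy'; subst.
    + apply (H3 i); auto; lia.
    + apply (H4 i); auto; lia.
Qed.

Lemma top_of_spec w : T w = true ->
  exists j, first_top w (top_of w) j /\ (forall i z, i <= j -> reach i w z -> T z = true).
Proof.
  intro Hw. destruct (T_reaches_b w Hw) as [k Hk].
  destruct (reach_bound N par Htree k w b (T_bound w Hw) Hk) as [k' [Hk'1 Hk'2]].
  eapply top_of_fuel_spec; eauto.
Qed.

Lemma first_top_unique w t1 t2 j1 j2 : first_top w t1 j1 -> first_top w t2 j2 -> t1 = t2.
Proof.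
  intros [A1 [B1 C1]] [A2 [B2 C2]].
  destruct (Nat.lt_total j1 j2) as [Hl|[He|Hl]].
  - rewrite (C2 j1 t1 Hl A1) in B1; discriminate.
  - subst; eapply reach_fun; eauto.
  - rewrite (C1 j2 t2 Hl A2) in B2; discriminate.
Qed.

Lemma top_of_top w : top w = true -> top_of w = w.
Proof. intro H. unfold top_of. destruct N; simpl; rewrite H; auto. Qed.

Lemma top_of_is_top w : T w = true -> top (top_of w) = true /\ T (top_of w) = true.
Proof. intro Hw. destruct (top_of_spec w Hw) as [j [[H1 [H2 H3]] H4]]. split; auto. apply (H4 j); auto. Qed.

Lemma top_of_walk i : forall w z, T w = true -> reach i w z ->
  (forall i' z', i' < i -> reach i' w z' -> top z' = false) ->
  T z = true /\ top_of z = top_of w.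
Proof.
  induction i; intros w z Hw Hr Hn; [apply reach0 in Hr; subst; auto|].
  apply reachS in Hr; destruct Hr as [y [Hy Hr]].
  assert (top w = false) as Ew by (apply (Hn 0); [lia|reflexivity]).
  assert (w <> b) as Hne by (intro; subst; rewrite top_b in Ew; discriminate).
  destruct (T_parent w Hw Hne) as [y' [H1 H2]]. rewrite Hy in H1; inversion H1; subst y'.
  destruct (top_of_spec w Hw) as [j [[A1 [B1 C1]] D1]].
  assert (top_of y = top_of w) as Eq.
  { destruct j as [|j]; [apply reach0 in A1; rewrite <- A1 in B1; congruence|].
    apply reachS in A1; destruct A1 as [y' [Hy' A1]]. rewrite Hy in Hy'; inversion Hy'; subst y'.
    destruct (top_of_spec y H2) as [j' [F' _]].
    eapply first_top_unique; [exact F'|]. split; [exact A1|split; auto].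
    intros i0 z0 Hi0 Hz0. apply (C1 (S i0)); [lia|]. apply reachS; eauto. }
  destruct (IHi y z H2 Hr) as [IH1 IH2].
  - intros i' z' Hi' Hz'. apply (Hn (S i')); [lia|]. apply reachS; eauto.
  - split; auto. congruence.
Qed.

Lemma top_of_par w y : T w = true -> top w = false -> par w = Some y ->
  T y = true /\ top_of y = top_of w.
Proof.
  intros Hw Ht Hy. apply (top_of_walk 1 w y Hw).
  - apply reachS; exists y; split; auto; reflexivity.
  - intros i' z' Hi' Hz'. replace i' with 0 in Hz' by lia. apply reach0 in Hz'; subst; auto.
Qed.

Definition comp t w := T w && Nat.eqb (top_of w) t.
Definition parent_or_self x := match par x with Some y => y | None => x end.
Definition heavy_into t x := heavy x && Nat.eqb (top_of (parent_or_self x)) t.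
Definition in_degree t : Z :=
  (Z.of_nat (length (filter (heavy_into t) (seq 0 N))) +
   (if Nat.eqb (top_of a) t then 1 else 0))%Z.
Definition comp_modes t i := Zsum (filter (comp t) (seq 0 N)) (fun w => nu w i).

Section Component.
Variable t : nat.
Hypothesis Htop : top t = true.

Lemma T_t : T t = true.
Proof. apply top_T; auto. Qed.

Lemma comp_self : comp t t = true.
Proof. unfold comp. rewrite T_t, top_of_top, Nat.eqb_refl; auto. Qed.

Lemma comp_T w : comp t w = true -> T w = true.
Proof. unfold comp; intro H; apply andb_true_iff in H; tauto. Qed.

Lemma comp_top_of w : comp t w = true -> top_of w = t.
Proof. unfold comp; intro H; apply andb_true_iff in H; destruct H as [_ H]; apply Nat.eqb_eq; auto. Qed.

Lemma comp_intro w : T w = true -> top_of w = t -> comp t w = true.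
Proof. unfold comp; intros H1 H2; rewrite H1, H2, Nat.eqb_refl; auto. Qed.

Lemma comp_reach w : comp t w = true -> exists j, reach j w t /\
  (forall i z, i <= j -> reach i w z -> comp t z = true).
Proof.
  intro Hw. destruct (top_of_spec w (comp_T w Hw)) as [j [[A1 [B1 C1]] D1]].
  rewrite (comp_top_of w Hw) in A1. exists j; split; auto.
  intros i z Hi Hz. destruct (top_of_walk i w z (comp_T w Hw) Hz) as [E1 E2].
  - intros i' z' Hi' Hz'. apply (C1 i'); auto; lia.
  - apply comp_intro; auto. rewrite E2; apply comp_top_of; auto.
Qed.

Lemma comp_nontop w : comp t w = true -> w <> t -> top w = false.
Proof.
  intros Hw Hne. destruct (top w) eqn:E; auto. exfalso. apply Hne.
  rewrite <- (top_of_top w E). apply comp_top_of; auto.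
Qed.

Lemma comp_parent w : comp t w = true -> w <> t -> exists y, par w = Some y /\ comp t y = true.
Proof.
  intros Hw Hne. pose proof (comp_nontop w Hw Hne) as Hn.
  assert (w <> b) as Hb by (intro; subst; rewrite top_b in Hn; discriminate).
  destruct (T_parent w (comp_T w Hw) Hb) as [y [H1 H2]]. exists y; split; auto.
  destruct (top_of_par w y (comp_T w Hw) Hn H1) as [_ E].
  apply comp_intro; auto. rewrite E; apply comp_top_of; auto.
Qed.

Lemma comp_parent_t y : par t = Some y -> comp t y = false.
Proof.
  intro E. destruct (comp t y) eqn:Cy; auto. exfalso.
  destruct (comp_reach y Cy) as [j [Hj _]].
  apply (reach_cycle N par Htree j t (T_bound t T_t)). apply reachS; eauto.
Qed.

Lemma comp_entering_cases x : entering N par (comp t) x ->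
  (x = w' /\ top_of a = t) \/ heavy_into t x = true.
Proof.
  intros [Hx [Cx [y [Ey Cy]]]]. destruct (T x) eqn:Tx.
  - right. assert (top_of x <> t) as Hne by (intro E; rewrite (comp_intro x Tx E) in Cx; discriminate).
    destruct (top x) eqn:Etx.
    + assert (x <> b) as Hxb.
      { intro; subst. destruct Hexi as [_ [_ [H|[w [H1 H2]]]]]; [congruence|].
        rewrite Ey in H1; inversion H1; subst. rewrite (comp_T w Cy) in H2; discriminate. }
      unfold heavy_into, parent_or_self. rewrite Ey, (comp_top_of y Cy), Nat.eqb_refl, andb_true_r.
      apply top_heavy; auto.
    + exfalso. destruct (top_of_par x y Tx Etx Ey) as [_ E].
      apply Hne; rewrite <- E; apply comp_top_of; auto.
  - left. assert (x = w') as ->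
      by (apply Hentu; split; auto; split; auto; exists y; split; auto; apply comp_T; auto).
    rewrite Ha in Ey; inversion Ey; subst. split; auto. apply comp_top_of; auto.
Qed.

Lemma heavy_into_entering x : heavy_into t x = true -> entering N par (comp t) x.
Proof.
  unfold heavy_into, parent_or_self. intro H. apply andb_true_iff in H; destruct H as [HL H2].
  assert (HL' := HL). unfold heavy in HL'. apply andb_true_iff in HL'; destruct HL' as [H1 _].
  destruct (par x) as [y|] eqn:E; [|unfold internalb in H1; rewrite E, andb_false_r in H1; discriminate].
  destruct (internal_ends par _ _ _ H1 E) as [Tx Ty]. apply Nat.eqb_eq in H2.
  assert (Cy : comp t y = true) by (apply comp_intro; auto).
  split; [apply T_bound; auto|]. split; [|exists y; split; auto].
  destruct (comp t x) eqn:Cx; auto. exfalso.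
  assert (top x = true) as Htx by (unfold top; rewrite HL; auto).
  assert (x = t) as -> by (rewrite <- (top_of_top x Htx); apply comp_top_of; auto).
  rewrite (comp_parent_t y E) in Cy; discriminate.
Qed.

Lemma w'_entering : top_of a = t -> entering N par (comp t) w'.
Proof.
  intro H. split; [apply w'_bound|]. split.
  - unfold comp; rewrite T_w'; auto.
  - exists a; split; auto. apply comp_intro; auto. apply T_a.
Qed.

Lemma reach_through_entering j : forall w, w < N -> reach j w t -> comp t w = false ->
  exists x, entering N par (comp t) x /\ exists k, reach k w x.
Proof.
  induction j; intros w Hw Hr Cw.
  - apply reach0 in Hr. rewrite <- Hr, comp_self in Cw; discriminate.
  - apply reachS in Hr; destruct Hr as [y [Ey Hr]].
    destruct (comp t y) eqn:Cy.
    + exists w; split; [split; auto; split; auto; exists y; auto|exists 0; reflexivity].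
    + assert (y < N) as Hy by (eapply (par_range _ _ Htree); eauto).
      destruct (IHj y Hy Hr Cy) as [x [Hx [k Hk]]]. exists x; split; auto.
      exists (S k); apply reachS; eauto.
Qed.

Lemma entering_reach x : entering N par (comp t) x -> exists k, reach k x t.
Proof.
  intros [_ [_ [y [Ey Cy]]]]. destruct (comp_reach y Cy) as [j [Hj _]].
  exists (S j); apply reachS; eauto.
Qed.

Lemma comp_not_below_entering w x k :
  comp t w = true -> entering N par (comp t) x -> reach k w x -> False.
Proof.
  intros Cw Hx Hk. destruct (comp_reach w Cw) as [j [Hj Hall]].
  destruct (le_lt_dec k j) as [Hle|Hlt].
  - destruct Hx as [_ [Cx _]]. rewrite (Hall k x Hle Hk) in Cx; discriminate.
  - pose proof (reach_split _ _ _ _ _ _ Hj Hk (Nat.lt_le_incl _ _ Hlt)) as H1.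
    destruct (entering_reach x Hx) as [k2 Hk2].
    pose proof (reach_trans _ _ _ _ _ _ H1 Hk2) as H3.
    destruct (k - j) eqn:E; [lia|].
    apply (reach_cycle N par Htree (n0 + k2) t (T_bound t T_t)); auto.
Qed.

Lemma comp_preceq w : comp t w = true -> preceq N par w t = true.
Proof.
  intro Cw. destruct (comp_reach w Cw) as [j [Hj _]].
  apply (preceq_iff N par Htree); [apply T_bound, comp_T; auto|eauto].
Qed.

Lemma momentum_no_entering : (forall x, entering N par (comp t) x -> False) ->
  forall i, momentum N par nu t i = comp_modes t i.
Proof.
  intros H i. unfold momentum, comp_modes. f_equal. apply filter_ext_in. intros w Hw.
  apply in_seq in Hw. destruct (comp t w) eqn:Cw; [apply comp_preceq; auto|].
  destruct (preceq N par w t) eqn:Pw; auto. exfalso.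
  apply (preceq_iff N par Htree) in Pw; [|lia]. destruct Pw as [k Hk].
  destruct (reach_through_entering k w ltac:(lia) Hk Cw) as [x [Hx _]]. eapply H; eauto.
Qed.

Lemma momentum_one_entering x : entering N par (comp t) x ->
  (forall y, entering N par (comp t) y -> y = x) ->
  forall i, momentum N par nu t i = (comp_modes t i + momentum N par nu x i)%Z.
Proof.
  intros Hx Hu i. unfold momentum, comp_modes. rewrite <- Zsum_filter_or.
  - f_equal. apply filter_ext_in. intros w Hw. apply in_seq in Hw.
    destruct (comp t w) eqn:Cw; simpl; [apply comp_preceq; auto|].
    destruct (entering_reach x Hx) as [kx Hkx].
    destruct (preceq N par w t) eqn:Pw.
    + apply (preceq_iff N par Htree) in Pw; [|lia]. destruct Pw as [k Hk].
      destruct (reach_through_entering k w ltac:(lia) Hk Cw) as [x' [Hx' [k' Hk']]].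
      rewrite (Hu x' Hx') in Hk'. symmetry; apply (preceq_iff N par Htree); [lia|eauto].
    + destruct (preceq N par w x) eqn:Px; auto.
      apply (preceq_iff N par Htree) in Px; [|lia]. destruct Px as [k Hk].
      rewrite <- Pw. apply (preceq_iff N par Htree); [lia|].
      exists (k + kx). eapply reach_trans; eauto.
  - intros w Hw Cw Px. apply in_seq in Hw.
    apply (preceq_iff N par Htree) in Px; [|lia]. destruct Px as [k Hk].
    eapply comp_not_below_entering; eauto.
Qed.

Lemma in_degree_0 : in_degree t = 0%Z -> forall x, entering N par (comp t) x -> False.
Proof.
  unfold in_degree. intros H x Hx. destruct (comp_entering_cases x Hx) as [[_ E]|E].
  - rewrite E, Nat.eqb_refl in H. lia.
  - assert (length (filter (heavy_into t) (seq 0 N)) = 0) as H0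
      by (destruct (Nat.eqb (top_of a) t); lia).
    assert (x < N) by (destruct Hx; auto).
    rewrite (filter_length0 _ _ H0 x) in E; [discriminate|apply in_seq; lia].
Qed.

Lemma in_degree_1 : in_degree t = 1%Z -> exists x, entering N par (comp t) x /\
  forall y, entering N par (comp t) y -> y = x.
Proof.
  unfold in_degree. intro H. destruct (Nat.eqb (top_of a) t) eqn:Ea.
  - assert (length (filter (heavy_into t) (seq 0 N)) = 0) as H0 by lia.
    apply Nat.eqb_eq in Ea. exists w'. split; [apply w'_entering; auto|].
    intros y Hy. destruct (comp_entering_cases y Hy) as [[E _]|E]; auto.
    assert (y < N) by (destruct Hy; auto).
    rewrite (filter_length0 _ _ H0 y) in E; [discriminate|apply in_seq; lia].
  - assert (length (filter (heavy_into t) (seq 0 N)) = 1) as H1 by lia.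
    destruct (filter_length1 _ _ H1) as [x0 [Hx0 [Lx0 Hu]]].
    exists x0. split; [apply heavy_into_entering; auto|].
    intros y Hy. destruct (comp_entering_cases y Hy) as [[_ E]|E].
    + apply Nat.eqb_neq in Ea; congruence.
    + apply Hu; auto. apply in_seq. destruct Hy; lia.
Qed.

Lemma comp_connected : connected par (comp t).
Proof.
  assert (Hto : forall w, comp t w = true -> conn par (comp t) w t).
  { intros w Cw. destruct (comp_reach w Cw) as [j [Hj Hall]].
    assert (K : forall i z, i <= j -> reach i w z -> conn par (comp t) w z).
    { induction i; intros z Hi Hz.
      - apply reach0 in Hz; rewrite Hz. apply conn_refl; auto.
      - destruct (reach_last par i w z Hz) as [y [Hy Ey]].
        eapply conn_up; [apply IHi; [lia|exact Hy]| |exact Ey].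
        unfold internalb; rewrite Ey, (Hall i y ltac:(lia) Hy), (Hall (S i) z Hi Hz); auto. }
    apply (K j); auto. }
  intros u v Hu Hv. eapply conn_trans; [apply Hto; auto|]. apply conn_sym, Hto; auto.
Qed.

Lemma comp_exiting : exiting N par (comp t) t.
Proof.
  split; [apply T_bound, T_t|]. split; [apply comp_self|].
  destruct (par t) as [y|] eqn:E; [right; exists y; split; auto; apply comp_parent_t; auto|left; auto].
Qed.

Lemma comp_exiting_unique v : exiting N par (comp t) v -> v = t.
Proof.
  intros [_ [Cv H]]. destruct (Nat.eq_dec v t) as [|Hne]; auto. exfalso.
  destruct (comp_parent v Cv Hne) as [y [Ey Cy]]. destruct H as [H|[w [H1 H2]]]; congruence.
Qed.

(* The component is a proper part of T, since T has at least two tops: b and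
   a line of scale n >= p. *)
Lemma comp_proper : exists o, T o = true /\ comp t o = false.
Proof.
  destruct Hcl as [_ [_ [_ [[v0 [Hv0 Sv0]] _]]]].
  assert (heavy v0 = true) as L0 by (unfold heavy; rewrite Hv0, Sv0; simpl; apply Z.leb_le; lia).
  assert (top v0 = true) as T0 by (unfold top; rewrite L0; auto).
  destruct (Nat.eq_dec t b) as [->|Hne].
  - exists v0. split; [apply top_T; auto|]. unfold comp. rewrite (top_of_top v0 T0).
    destruct (Nat.eqb_spec v0 b) as [->|]; [rewrite heavy_b in L0; discriminate|].
    apply andb_false_r.
  - exists b. split; [apply T_b|]. unfold comp. rewrite (top_of_top b top_b).
    destruct (Nat.eqb_spec b t); [congruence|]. apply andb_false_r.
Qed.

Lemma comp_line_light v : internalb par (comp t) v = true -> (scale v < Z.of_nat p)%Z.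
Proof.
  intro Iv. destruct (par v) as [y|] eqn:E;
    [|unfold internalb in Iv; rewrite E, andb_false_r in Iv; discriminate].
  destruct (internal_ends par _ _ _ Iv E) as [Cv Cy].
  assert (v <> t) as Hne by (intro; subst; rewrite (comp_parent_t y E) in Cy; discriminate).
  pose proof (comp_nontop v Cv Hne) as Nt. unfold top, heavy in Nt.
  apply orb_false_iff in Nt; destruct Nt as [Nt _].
  unfold internalb in Nt. rewrite E, (comp_T v Cv), (comp_T y Cy) in Nt. simpl in Nt.
  apply Z.leb_gt in Nt; auto.
Qed.

(* Any connected subgraph whose lines have scale < p and which meets the
   component is contained in it: leaving it would cross a top line, the
   entering line of T or a line above b, all of scale >= p. *)
Lemma comp_maximal (T' : nat -> bool) (q : Z) : in_nodes N T' -> lines_le par scale T' q ->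
  (q < Z.of_nat p)%Z -> forall u v, conn par T' u v -> comp t u = true -> comp t v = true.
Proof.
  intros Hin' Hle' Hq u v Hc.
  induction Hc as [v Hv|u v w Hc IH Hi0 E|u v w Hc IH Hi0 E]; intro Cu; auto;
    specialize (IH Cu); specialize (Hle' v Hi0).
  - destruct (Nat.eq_dec v t) as [->|Hne].
    + exfalso. destruct (Nat.eq_dec t b) as [->|Htb].
      * pose proof (exiting_scale w E). lia.
      * pose proof (heavy_scale t (top_heavy t Htop Htb)). lia.
    + destruct (comp_parent v IH Hne) as [y [Ey Cy]]. congruence.
  - destruct (internal_ends par _ _ _ Hi0 E) as [T'v _].
    destruct (T v) eqn:Tv; [destruct (top v) eqn:Etv|].
    + exfalso. destruct (Nat.eq_dec v b) as [->|Hvb].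
      * destruct Hexi as [_ [_ [H|[w0 [H1 H2]]]]]; [congruence|].
        rewrite E in H1; inversion H1; subst. rewrite (comp_T w0 IH) in H2; discriminate.
      * pose proof (heavy_scale v (top_heavy v Etv Hvb)). lia.
    + destruct (top_of_par v w Tv Etv E) as [_ Ew].
      apply comp_intro; auto. rewrite <- Ew. apply comp_top_of; auto.
    + exfalso. assert (v = w') as ->.
      { apply Hentu. split; [apply Hin'; auto|split; auto]. exists w; split; auto. apply comp_T; auto. }
      pose proof entering_scale. lia.
Qed.

Lemma comp_entering_heavy x : entering N par (comp t) x -> x < N /\ (Z.of_nat p <= scale x)%Z.
Proof.
  intro Hx. destruct (comp_entering_cases x Hx) as [[-> _]|L].
  - split; [apply w'_bound|pose proof entering_scale; lia].
  - unfold heavy_into in L; apply andb_true_iff in L; destruct L as [L _].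
    split; [apply heavy_bound|apply heavy_scale]; auto.
Qed.

Lemma comp_cluster v0 : internalb par (comp t) v0 = true ->
  (forall v, internalb par (comp t) v = true -> (scale v <= scale v0)%Z) ->
  cluster N par scale (comp t) (scale v0).
Proof.
  intros Iv0 Mv0. pose proof (comp_line_light v0 Iv0) as Hq.
  split; [intros v Hv; apply T_bound, comp_T; auto|].
  split; [apply comp_connected|]. split; [exact Mv0|]. split; [exists v0; auto|].
  intros T' Hin' Hsub Hco' Hle' v Hv.
  apply (comp_maximal T' (scale v0) Hin' Hle' Hq t v); [|apply comp_self].
  apply Hco'; auto. apply Hsub, comp_self.
Qed.

Lemma comp_se_cluster x : entering N par (comp t) x ->
  (forall y, entering N par (comp t) y -> y = x) ->
  (forall i, i < d -> comp_modes t i = 0%Z) -> se_cluster d N par nu scale (comp t).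
Proof.
  intros Hx Hu H0.
  destruct (classic (exists v, In v (seq 0 N) /\ internalb par (comp t) v = true)) as [Hi|Hni].
  - left. destruct (filter_argmax _ _ scale Hi) as [v0 [Hv0 [Iv0 Mv0]]].
    exists (scale v0). split.
    + apply comp_cluster; auto. intros v Hv. apply Mv0; auto.
      destruct (par v) as [y|] eqn:E; [|unfold internalb in Hv; rewrite E, andb_false_r in Hv; discriminate].
      destruct (internal_ends par _ _ _ Hv E) as [Cv _].
      apply in_seq. split; [lia|]. apply T_bound, comp_T; auto.
    + exists x. split; auto. split; auto. exists t.
      split; [apply comp_exiting|]. split; [apply comp_exiting_unique|].
      intros i Hi2. rewrite (momentum_one_entering x Hx Hu i), H0; auto.
  - right. exists t. split; [apply T_bound, T_t|].
    assert (Hiff : forall z, comp t z = true <-> z = t).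
    { intro z; split; [|intros ->; apply comp_self].
      intro Cz. destruct (Nat.eq_dec z t) as [|Hne]; auto. exfalso.
      destruct (comp_parent z Cz Hne) as [y [Ey Cy]]. apply Hni. exists z.
      split; [apply in_seq; split; [lia|apply T_bound, comp_T; auto]|].
      unfold internalb; rewrite Ey, Cz, Cy; auto. }
    split; auto. split; [|exists x; split; auto].
    intros i Hi. rewrite <- (H0 i Hi). unfold comp_modes. symmetry.
    apply (Zsum_filter_single _ t (fun w => nu w i)); [|apply seq_NoDup|intros z _; apply Hiff].
    apply in_seq; split; [lia|apply T_bound, T_t].
Qed.

(* Renormalisation therefore forbids a zero total mode in such a component. *)
Lemma comp_modes_nonzero x : entering N par (comp t) x ->
  (forall y, entering N par (comp t) y -> y = x) -> vnonzero d (comp_modes t).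
Proof.
  intros Hx Hu. apply NNPP. intro Hz.
  assert (H0 : forall i, i < d -> comp_modes t i = 0%Z).
  { intros i Hi. destruct (Z.eq_dec (comp_modes t i) 0); auto. exfalso; apply Hz; exists i; auto. }
  destruct comp_proper as [o [To Co]].
  assert (comp t o = true) by (apply (Hren (comp t) (comp_se_cluster x Hx Hu H0)); auto; apply comp_T).
  congruence.
Qed.

(* The top line carries the momentum of a line of scale >= p: itself if it
   is heavy, the entering line of T if it is the exiting line b. *)
Lemma top_momentum : exists u, u < N /\ (Z.of_nat p <= scale u)%Z /\
  forall i, i < d -> momentum N par nu t i = momentum N par nu u i.
Proof.
  destruct (Nat.eq_dec t b) as [->|Hne].
  - exists w'. split; [apply w'_bound|]. split; [pose proof entering_scale; lia|]. apply Hveq.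
  - exists t. pose proof (top_heavy t Htop Hne) as L.
    split; [apply heavy_bound; auto|split; [apply heavy_scale; auto|auto]].
Qed.

End Component.

Lemma in_degree_nonneg t : (0 <= in_degree t)%Z.
Proof. unfold in_degree; destruct (Nat.eqb (top_of a) t); lia. Qed.

(* The counting argument, for an abstract lower bound B on the norm of the
   momentum of any line of scale >= p and of any nonzero difference of two
   such momenta (up to a factor 2). *)
Variable B : Z.
Hypothesis HB : (0 <= B)%Z.
Hypothesis Hline : forall u, u < N -> (Z.of_nat p <= scale u)%Z ->
  (B <= 2 * norm1 d (momentum N par nu u))%Z.
Hypothesis Hdiff : forall u v (mu : vec), u < N -> v < N ->
  (Z.of_nat p <= scale u)%Z -> (Z.of_nat p <= scale v)%Z ->
  (forall i, i < d -> mu i = (momentum N par nu u i - momentum N par nu v i)%Z) ->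
  vnonzero d mu -> (B <= 2 * norm1 d mu)%Z.

Definition comp_K t := Zsum (filter (comp t) (seq 0 N)) (fun w => norm1 d (nu w)).

Lemma comp_K_bound t : top t = true -> (in_degree t <= 1)%Z -> (B <= 2 * comp_K t)%Z.
Proof.
  intros Ht Hd. destruct (top_momentum t Ht) as [u [Hu1 [Hu2 Hu3]]].
  assert (HK : (norm1 d (comp_modes t) <= comp_K t)%Z) by apply norm1_Zsum.
  destruct (Z.eq_dec (in_degree t) 0) as [H0|H1].
  - pose proof (momentum_no_entering t Ht (in_degree_0 t H0)) as E.
    specialize (Hline u Hu1 Hu2).
    rewrite (norm1_ext d (momentum N par nu u) (comp_modes t)) in Hline; [lia|].
    intros i Hi; rewrite <- Hu3, E; auto.
  - pose proof (in_degree_nonneg t).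
    destruct (in_degree_1 t Ht ltac:(lia)) as [x [Hx Hxu]].
    destruct (comp_entering_heavy t x Hx) as [Hx1 Hx2].
    enough (B <= 2 * norm1 d (comp_modes t))%Z by lia.
    apply (Hdiff u x); auto; [|apply (comp_modes_nonzero t Ht x Hx Hxu)].
    intros i Hi. rewrite <- Hu3 by auto. rewrite (momentum_one_entering t Ht x Hx Hxu i). lia.
Qed.

Definition tops := filter top (seq 0 N).

Lemma tops_NoDup : NoDup tops.
Proof. apply NoDup_filter, seq_NoDup. Qed.

Lemma top_of_in_tops w : T w = true -> In (top_of w) tops.
Proof.
  intro Hw. destruct (top_of_is_top w Hw) as [H1 H2]. apply filter_In. split; auto.
  apply in_seq; split; [lia|apply T_bound; auto].
Qed.

Lemma tops_length : Z.of_nat (length tops) = (Z.of_nat (Nlines_ge N par scale T p) + 1)%Z.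
Proof.
  unfold tops, top, Nlines_ge. rewrite !length_as_Zsum. rewrite Zsum_filter_or.
  - f_equal. apply (Zsum_filter_single _ b (fun _ => 1%Z)); [|apply seq_NoDup|].
    + apply in_seq; split; [lia|apply T_bound, T_b].
    + intros z _; apply Nat.eqb_eq.
  - intros w _ H1 H2. apply Nat.eqb_eq in H2; subst. rewrite heavy_b in H1; discriminate.
Qed.

(* Every heavy line and the entering line of T enter exactly one component,
   so the in-degrees add up to the number of components. *)
Lemma in_degree_sum : Zsum tops in_degree = Z.of_nat (length tops).
Proof.
  assert (HsL : Zsum tops (fun t => Z.of_nat (length (filter (heavy_into t) (seq 0 N)))) =
                Z.of_nat (Nlines_ge N par scale T p)).
  { unfold Nlines_ge. fold heavy. rewrite length_as_Zsum.
    rewrite (Zsum_ext _ _ (fun t => Zsum (filter (heavy_into t) (seq 0 N)) (fun _ => 1%Z)))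
      by (intros; apply length_as_Zsum).
    unfold heavy_into. apply Zsum_fibres; [apply tops_NoDup|]. intros x _ Hx.
    assert (Hx' := Hx). unfold heavy in Hx'. apply andb_true_iff in Hx'; destruct Hx' as [Hx' _].
    unfold parent_or_self. destruct (par x) as [y|] eqn:E;
      [|unfold internalb in Hx'; rewrite E, andb_false_r in Hx'; discriminate].
    destruct (internal_ends par _ _ _ Hx' E) as [_ Ty]. apply top_of_in_tops; auto. }
  assert (Hsa : Zsum tops (fun t => if Nat.eqb (top_of a) t then 1%Z else 0%Z) = 1%Z)
    by (apply Zsum_indicator; [apply tops_NoDup|apply top_of_in_tops, T_a]).
  unfold in_degree. rewrite Zsum_add, HsL, Hsa, tops_length. reflexivity.
Qed.

Lemma comp_K_sum : Zsum tops comp_K = Kval d N nu T.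
Proof.
  unfold comp_K, comp, Kval. apply Zsum_fibres; [apply tops_NoDup|].
  intros x _ Hx. apply top_of_in_tops; auto.
Qed.

Theorem heavy_lines_bound : (B * (Z.of_nat (Nlines_ge N par scale T p) + 1) <= 4 * Kval d N nu T)%Z.
Proof.
  assert (Hper : forall t, In t tops -> (B <= 4 * comp_K t + B * (in_degree t - 1))%Z).
  { intros t Ht. apply filter_In in Ht; destruct Ht as [_ Ht].
    assert (0 <= comp_K t)%Z as HK by (apply Zsum_nonneg; intros; apply norm1_nonneg).
    pose proof (in_degree_nonneg t).
    destruct (Z_le_gt_dec (in_degree t) 1) as [Hle|Hgt]; [pose proof (comp_K_bound t Ht Hle)|]; nia. }
  pose proof (Zsum_le tops (fun _ => B) (fun t => 4 * comp_K t + B * (in_degree t - 1))%Z Hper) as Hs.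
  rewrite (Zsum_ext _ (fun t => 4 * comp_K t + B * (in_degree t - 1))%Z
    (fun t => 4 * comp_K t + (B * in_degree t + (- B) * 1))%Z) in Hs by (intros; lia).
  rewrite Zsum_const, !Zsum_add, !Zsum_scale, comp_K_sum, in_degree_sum, Zsum_const, tops_length in Hs.
  lia.
Qed.

End Decomposition.
Close Scope nat_scope.
Open Scope R_scope.

Lemma Rmin_list_le (l : list R) x : In x l -> Rmin_list l <= x.
Proof.
  destruct l as [|y l]; [intros []|]. simpl.
  assert (K : forall z, (z = y \/ In z l) -> fold_right Rmin y l <= z).
  { induction l as [|u l IH]; simpl; intros z [Hz|Hz]; [subst; lra|destruct Hz| |].
    - pose proof (IH z (or_introl Hz)). pose proof (Rmin_r u (fold_right Rmin y l)). lra.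
    - destruct Hz as [Hz|Hz]; [subst; apply Rmin_l|].
      pose proof (IH z (or_intror Hz)). pose proof (Rmin_r u (fold_right Rmin y l)). lra. }
  intros [H|H]; apply K; auto.
Qed.

Lemma Rmin_list_in (l : list R) : l <> [] -> In (Rmin_list l) l.
Proof.
  destruct l as [|y l]; [congruence|]. intros _. simpl.
  induction l as [|u l IH]; [left; reflexivity|].
  change (fold_right Rmin y (u :: l)) with (Rmin u (fold_right Rmin y l)).
  apply (Rmin_case u (fold_right Rmin y l) (fun r => In r (y :: u :: l))); [right; left; auto|].
  destruct IH as [H|H]; [left; auto|right; right; auto].
Qed.

Lemma Rsum_ext (l : list nat) (f g : nat -> R) : (forall x, In x l -> f x = g x) -> Rsum l f = Rsum l g.
Proof.
  intro H; induction l as [|x l IH]; simpl; auto.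
  rewrite H by (left; auto). f_equal. apply IH; intros; apply H; right; auto.
Qed.

Lemma dot_ext d omega (mu mu' : vec) :
  (forall i, (i < d)%nat -> mu i = mu' i) -> dot d omega mu = dot d omega mu'.
Proof. intro H. unfold dot. apply Rsum_ext. intros i Hi. apply in_seq in Hi. rewrite H; auto; lia. Qed.

Lemma dot_minus d omega (mu u v : vec) : (forall i, (i < d)%nat -> mu i = (u i - v i)%Z) ->
  dot d omega mu = dot d omega u - dot d omega v.
Proof.
  intro H. unfold dot.
  assert (Hsub : forall l f g, Rsum l (fun x => f x - g x) = Rsum l f - Rsum l g)
    by (induction l; intros; simpl; [lra|rewrite IHl; lra]).
  rewrite <- Hsub. apply Rsum_ext. intros i Hi. apply in_seq in Hi.
  rewrite H by lia. rewrite minus_IZR. ring.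
Qed.

Lemma in_Zrange B z : (0 <= B)%Z -> (Z.abs z <= B)%Z -> In z (Zrange B).
Proof.
  intros HB Hz. unfold Zrange. apply in_map_iff. exists (Z.to_nat (z + B)). split.
  - rewrite Z2Nat.id by lia. lia.
  - apply in_seq. split; [lia|]. apply Nat2Z.inj_lt. rewrite !Z2Nat.id by lia. lia.
Qed.

Lemma in_boxlists B : (0 <= B)%Z -> forall d (l : list Z), length l = d ->
  (forall z, In z l -> (Z.abs z <= B)%Z) -> In l (boxlists d B).
Proof.
  intros HB d; induction d; intros l Hl Hz.
  - destruct l; simpl in *; [auto|lia].
  - destruct l as [|z l]; simpl in Hl; [lia|]. simpl. apply in_flat_map. exists z. split.
    + apply in_Zrange; auto. apply Hz; left; auto.
    + apply in_map. apply IHd; [lia|]. intros; apply Hz; right; auto.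
Qed.

Lemma vec_of_list_map d (mu : vec) i : (i < d)%nat -> vec_of_list (map mu (seq 0 d)) i = mu i.
Proof.
  intro Hi. unfold vec_of_list.
  rewrite (nth_indep _ 0%Z (mu 0%nat)) by (rewrite length_map, length_seq; auto).
  rewrite map_nth, seq_nth; auto.
Qed.

Lemma alpha_le_dot d omega M (mu : vec) : vnonzero d mu -> (norm1 d mu <= 2 ^ Z.of_nat M)%Z ->
  alpha d omega M <= Rabs (dot d omega mu).
Proof.
  intros Hnz Hn. set (l := map mu (seq 0 d)).
  assert (Hag : forall i, (i < d)%nat -> vec_of_list l i = mu i) by (intros; apply vec_of_list_map; auto).
  unfold alpha. rewrite (dot_ext d omega mu (vec_of_list l)) by (intros; rewrite Hag; auto).
  apply Rmin_list_le. apply (in_map (fun nu => Rabs (dot d omega nu))).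
  unfold alpha_candidates. apply filter_In. split.
  - apply (in_map vec_of_list). apply in_boxlists; [lia|unfold l; rewrite length_map, length_seq; auto|].
    intros z Hz. unfold l in Hz. apply in_map_iff in Hz. destruct Hz as [i [<- Hi]]. apply in_seq in Hi.
    pose proof (abs_le_norm1 d mu i ltac:(lia)). lia.
  - apply andb_true_iff. split.
    + destruct Hnz as [i [Hi Hne]]. unfold nonzerob. apply existsb_exists. exists i.
      split; [apply in_seq; lia|]. rewrite Hag by auto. destruct (Z.eqb_spec (mu i) 0); auto.
    + apply Z.leb_le. rewrite (norm1_ext d _ mu) by auto. auto.
Qed.

Lemma alpha_antitone d omega a b : (a <= b)%nat -> 0 < alpha d omega a ->
  alpha d omega b <= alpha d omega a.
Proof.
  intros Hab Hpos. unfold alpha at 2.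
  set (L := map (fun nu => Rabs (dot d omega nu)) (alpha_candidates d a)).
  assert (L <> []) as HL
    by (intro E; unfold alpha in Hpos; fold L in Hpos; rewrite E in Hpos; simpl in Hpos; lra).
  pose proof (Rmin_list_in L HL) as H. unfold L in H at 2.
  apply in_map_iff in H. destruct H as [mu [Hmu Hin]]. rewrite <- Hmu.
  unfold alpha_candidates in Hin. apply filter_In in Hin. destruct Hin as [_ Hf].
  apply andb_true_iff in Hf. destruct Hf as [Hf1 Hf2]. apply alpha_le_dot.
  - unfold nonzerob in Hf1. apply existsb_exists in Hf1. destruct Hf1 as [i [Hi Hne]].
    apply in_seq in Hi. exists i. split; [lia|].
    destruct (Z.eqb_spec (mu i) 0); simpl in Hne; [discriminate|auto].
  - apply Z.leb_le in Hf2. eapply Z.le_trans; [exact Hf2|]. apply Z.pow_le_mono_r; lia.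
Qed.

Lemma mseq_monotone d omega m : is_mseq d omega m -> forall a b, (a <= b)%nat -> (m a <= m b)%nat.
Proof.
  intros [_ Hs] a b Hab. induction Hab; auto.
  destruct (Hs m0) as [q [_ E]]. lia.
Qed.

(* Small divisors: a nonvanishing Psi_s(x) with s >= p >= 1 forces
   |x| < alpha_{m_{p-1}}/4, through the factor chi_{s-1}. *)
Lemma psi_small_divisor d omega chi m p s x : bryuno d omega -> is_mseq d omega m -> cutoff chi ->
  (1 <= p)%nat -> (p <= s)%nat -> Psi chi d omega m s x <> 0 ->
  Rabs x < alpha d omega (m (p - 1)%nat) / 4.
Proof.
  intros [Hpos _] Hms Hcut Hp Hs Hpsi.
  destruct s as [|s']; [lia|]. unfold Psi in Hpsi.
  assert (chi_n chi d omega m s' x <> 0) as Hc by (intro E; apply Hpsi; rewrite E; ring).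
  unfold chi_n in Hc. destruct Hcut as [_ [_ [_ [_ H0]]]].
  assert (Rabs (4 * x / alpha d omega (m s')) < 1) as H1.
  { destruct (Rlt_le_dec (Rabs (4 * x / alpha d omega (m s'))) 1); auto. exfalso; apply Hc, H0; auto. }
  specialize (Hpos (m s')) as Ha.
  assert (Rabs x < alpha d omega (m s') / 4) as H2.
  { unfold Rdiv in H1.
    rewrite Rabs_mult, Rabs_mult, Rabs_inv, (Rabs_right 4), (Rabs_right (alpha _ _ _)) in H1 by lra.
    apply Rmult_lt_compat_r with (r := alpha d omega (m s')) in H1; [|lra].
    rewrite Rmult_assoc, Rinv_l, Rmult_1_r, Rmult_1_l in H1 by lra. lra. }
  assert (alpha d omega (m s') <= alpha d omega (m (p - 1)%nat)).
  { apply alpha_antitone; [apply (mseq_monotone d omega m Hms); lia|apply Hpos]. }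
  lra.
Qed.

(* A nonzero vector mu with |omega.mu| < alpha_{m_{p-1}}/2 has |mu| >= 2^{m_p}/2:
   with m_p = m_{p-1} + q + 1, |omega.mu| < alpha_{m_{p-1}+q} by choice of q. *)
Lemma small_divisor_norm d omega m p (mu : vec) : bryuno d omega -> is_mseq d omega m ->
  vnonzero d mu ->
  ((1 <= p)%nat -> Rabs (dot d omega mu) < alpha d omega (m (p - 1)%nat) / 2) ->
  (2 ^ Z.of_nat (m p) <= 2 * norm1 d mu)%Z.
Proof.
  intros [Hpos _] [Hm0 Hms] Hnz Hsd. destruct p as [|p'].
  - rewrite Hm0. pose proof (vnonzero_norm1 d mu Hnz). change (Z.of_nat 0) with 0%Z.
    rewrite Z.pow_0_r. lia.
  - destruct (Hms p') as [q [[Hq _] E]]. specialize (Hsd ltac:(lia)).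
    replace (S p' - 1)%nat with p' in Hsd by lia. rewrite E.
    replace (Z.of_nat (m p' + q + 1)) with (Z.of_nat (m p' + q) + 1)%Z by lia.
    rewrite Z.pow_add_r, Z.pow_1_r by lia.
    destruct (Z_le_gt_dec (2 ^ Z.of_nat (m p' + q) * 2) (2 * norm1 d mu)) as [H|H]; auto.
    exfalso. pose proof (alpha_le_dot d omega (m p' + q) mu Hnz ltac:(lia)). lra.
Qed.

Section Propagators.
Variables (d : nat) (omega : nat -> R) (chi : R -> R) (m : nat -> nat)
  (N : nat) (par : nat -> option nat) (nu : nat -> vec) (scale : nat -> Z) (p : nat).
Hypothesis Hbry : bryuno d omega.
Hypothesis Hms : is_mseq d omega m.
Hypothesis Hcut : cutoff chi.
Hypothesis Hlab : labelled_tree d N par nu scale.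
Hypothesis Hpsi : forall v, (v < N)%nat -> (0 <= scale v)%Z ->
  Psi chi d omega m (Z.to_nat (scale v)) (dot d omega (momentum N par nu v)) <> 0.

Lemma line_small_divisor u : (u < N)%nat -> (Z.of_nat p <= scale u)%Z -> (1 <= p)%nat ->
  Rabs (dot d omega (momentum N par nu u)) < alpha d omega (m (p - 1)%nat) / 4.
Proof.
  intros Hu Hs Hp1. apply (psi_small_divisor d omega chi m p (Z.to_nat (scale u))); auto; [lia|].
  apply Hpsi; auto; lia.
Qed.

Lemma line_momentum_nonzero u : (u < N)%nat -> (0 <= scale u)%Z -> vnonzero d (momentum N par nu u).
Proof.
  intros Hu Hs. destruct Hlab as [_ [_ H3]]. destruct (H3 u Hu) as [H4 _].
  apply NNPP. intro H. assert (Hz : vzero d (momentum N par nu u)).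
  { intros i Hi. destruct (Z.eq_dec (momentum N par nu u i) 0); auto. exfalso; apply H; exists i; auto. }
  specialize (H4 Hz). lia.
Qed.

Lemma line_momentum_norm u : (u < N)%nat -> (Z.of_nat p <= scale u)%Z ->
  (2 ^ Z.of_nat (m p) <= 2 * norm1 d (momentum N par nu u))%Z.
Proof.
  intros Hu Hs. apply (small_divisor_norm d omega m p); auto; [apply line_momentum_nonzero; auto; lia|].
  intro Hp1. pose proof (line_small_divisor u Hu Hs Hp1). pose proof (proj1 Hbry (m (p - 1)%nat)). lra.
Qed.

Lemma momentum_difference_norm u v (mu : vec) : (u < N)%nat -> (v < N)%nat ->
  (Z.of_nat p <= scale u)%Z -> (Z.of_nat p <= scale v)%Z ->
  (forall i, (i < d)%nat -> mu i = (momentum N par nu u i - momentum N par nu v i)%Z) ->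
  vnonzero d mu -> (2 ^ Z.of_nat (m p) <= 2 * norm1 d mu)%Z.
Proof.
  intros Hu Hv Hsu Hsv Hmu Hmnz. apply (small_divisor_norm d omega m p); auto.
  intro Hp1. rewrite (dot_minus d omega mu _ _ Hmu).
  pose proof (line_small_divisor u Hu Hsu Hp1). pose proof (line_small_divisor v Hv Hsv Hp1).
  pose proof (Rabs_triang (dot d omega (momentum N par nu u)) (- dot d omega (momentum N par nu v))) as Ht.
  rewrite Rabs_Ropp in Ht. unfold Rminus. lra.
Qed.

End Propagators.

Lemma power_bound (M Np : nat) (K : Z) : (2 ^ Z.of_nat M * (Z.of_nat Np + 1) <= 4 * K)%Z ->
  INR Np <= powerRZ 2 (- (Z.of_nat M - 2)) * IZR K.
Proof.
  intro HZ. set (B := (2 ^ Z.of_nat M)%Z) in *.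
  assert (HBpos : (0 < B)%Z) by (unfold B; apply Z.pow_pos_nonneg; lia).
  assert (HZ' : (B * Z.of_nat Np <= 4 * K)%Z) by lia.
  apply IZR_le in HZ'. rewrite !mult_IZR in HZ'.
  replace (- (Z.of_nat M - 2))%Z with (2 + - Z.of_nat M)%Z by lia.
  rewrite powerRZ_add, powerRZ_neg', <- pow_powerRZ by lra.
  replace (2 ^ M) with (IZR B) by (unfold B; rewrite <- pow_IZR; reflexivity).
  rewrite INR_IZR_INZ. assert (0 < IZR B) by (apply IZR_lt; auto). simpl powerRZ.
  apply Rmult_le_reg_l with (r := IZR B); auto.
  replace (IZR B * (2 * (2 * 1) * / IZR B * IZR K)) with (4 * IZR K) by (field; lra).
  lra.
Qed.

Theorem lemma3p5 (d : nat) (omega : nat -> R) (chi : R -> R) (m : nat -> nat)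
  (N : nat) (par : nat -> option nat) (nu : nat -> vec) (scale : nat -> Z)
  (T : nat -> bool) (n : nat) :
  bryuno d omega -> is_mseq d omega m -> cutoff chi ->
  labelled_tree d N par nu scale ->
  (forall v, (v < N)%nat -> (0 <= scale v)%Z ->
     Psi chi d omega m (Z.to_nat (scale v)) (dot d omega (momentum N par nu v)) <> 0) ->
  se_cluster_on_scale d N par nu scale T (Z.of_nat n) ->
  renormalised d N par nu scale T ->
  forall p, (p <= n)%nat ->
    INR (Nlines_ge N par scale T p) <=
    powerRZ 2 (- (Z.of_nat (m p) - 2)) * IZR (Kval d N nu T).
Proof.
  intros Hbry Hms Hcut Hlab Hpsi Hse Hren p Hp.
  destruct Hse as [Hcl [w' [Hent [Hentu [b [Hexi [Hexu Hveq]]]]]]].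
  assert (Ha : exists a, par w' = Some a) by (destruct Hent as [_ [_ [a [Ha _]]]]; eauto).
  destruct Ha as [a Ha].
  apply power_bound.
  apply (heavy_lines_bound d N par nu scale T n p b w' a); auto.
  - apply (proj1 Hlab).
  - apply Z.pow_nonneg; lia.
  - apply (line_momentum_norm d omega chi); auto.
  - apply (momentum_difference_norm d omega chi); auto.
Qed.
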